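(* Let $s\in(0,1)$, $\kappa>0$, and let $\mathcal{T}$ and $|\cdot|$ be as in the context. (i) If $s\le 3/4$, then (for every $\kappa>0$) there is $\tau\in\mathcal{T}\setminus\{\Xi\}$ with $|\tau|\le|\Xi|$. (ii) If $s>3/4$, then there is $\kappa_0(s)>0$ such that for all $\kappa\in(0,\kappa_0)$ one has $|\Xi|<|\tau|$ for all $\tau\in\mathcal{T}\setminus\{\Xi\}$; moreover, in this case, for every $\beta\in\mathbb{R}$ the set $\mathcal{T}_{<\beta}:=\{\tau\in\mathcal{T}:|\tau|<\beta\}$ is finite.
   Context: Fix $d\ge1$. Consider formal symbols (non-planar decorated rooted trees): a noise symbol $\Xi$ and monomials $\mathbf{X}^k$, $k\in\mathbb{N}^{1+d}$ (with $\mathbf{1}:=\mathbf{X}^0$), together with abstract integration maps $\mathcal{I}$ and $\mathcal{I}_j$ ($j=1,\dots,d$) and a commutative, associative product (with unit $\mathbf{1}$, and $\mathbf{X}^k\mathbf{X}^m=\mathbf{X}^{k+m}$). The set $\mathcal{T}$ is the smallest set containing $\Xi$ and all $\mathbf{X}^k$ such that whenever $\tau_1,\tau_2,\tau_3\in\mathcal{T}$, $j\in\{1,\dots,d\}$, $k\in\mathbb{N}^{1+d}$, the symbols $\mathbf{X}^k\mathcal{I}(\tau_1)$, $\mathbf{X}^k\mathcal{I}_j(\tau_1)$, $\mathbf{X}^k\mathcal{I}(\tau_1)\mathcal{I}(\tau_2)$ and $\mathcal{I}(\tau_1)\mathcal{I}(\tau_2)\mathcal{I}(\tau_3)$ belong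 to $\mathcal{T}$, with the convention that $\mathcal{I}(\mathbf{X}^k)=0$ (integration is not applied to pure monomials). Homogeneity: $|\Xi|:=-s-\frac32-\kappa$, $|\mathbf{X}^k|:=2sk_0+\sum_{i=1}^dk_i$, $|\mathcal{I}(\tau)|:=|\tau|+2s$, $|\mathcal{I}_j(\tau)|:=|\tau|+2s-1$, and the homogeneity of a product is the sum of the homogeneities of the factors. *)

From Stdlib Require Lists.List.
From mathcomp Require Import all_boot all_order all_algebra.
From mathcomp Require Import reals.
Set Implicit Arguments. Unset Strict Implicit. Unset Printing Implicit Defensive.
Import Order.TTheory GRing.Theory Num.Theory.
Local Open Scope ring_scope.

(* Multi-indices k in N^{1+d}: k 0 is the time component, k (lift 0 i) the
   space components i = 1..d. *)
Definition mindex (d : nat) := {ffun 'I_d.+1 -> nat}.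

(* Decorated rooted trees: either the noise Xi, or a root decorated by a
   monomial X^k multiplied by a product of planted trees; an edge labelled
   [None] is I(.), an edge labelled [Some j] is I_{j+1}(.) (j : 'I_d). *)
Inductive symb (d : nat) : Type :=
| Xi : symb d
| Node : mindex d -> list (option 'I_d * symb d) -> symb d.
Arguments Xi {d}.

Definition is_mono d (t : symb d) : bool :=
  match t with Node _ nil => true | _ => false end.

Definition mono0 d : mindex d := [ffun => 0%N].

(* The set \mathcal{T}. I(X^k) = 0 (and I_j(X^k) = 0) is enforced by
   requiring the integrand not to be a pure monomial. *)
Inductive inT (d : nat) : symb d -> Prop :=
| T_Xi : inT Xi
| T_X (k : mindex d) : inT (Node k nil)
| T_I (k : mindex d) t : inT t -> ~~ is_mono t -> inT (Node k [:: (None, t)])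
| T_Ij (k : mindex d) (j : 'I_d) t : inT t -> ~~ is_mono t ->
    inT (Node k [:: (Some j, t)])
| T_II (k : mindex d) t1 t2 : inT t1 -> ~~ is_mono t1 -> inT t2 -> ~~ is_mono t2 ->
    inT (Node k [:: (None, t1); (None, t2)])
| T_III t1 t2 t3 : inT t1 -> ~~ is_mono t1 -> inT t2 -> ~~ is_mono t2 ->
    inT t3 -> ~~ is_mono t3 ->
    inT (Node (mono0 d) [:: (None, t1); (None, t2); (None, t3)]).

Section Hom.
Variables (R : realType) (d : nat) (s kappa : R).

Definition mono_hom (k : mindex d) : R :=
  2 * s * (k ord0)%:R + \sum_(i < d) (k (lift ord0 i))%:R.

Fixpoint shom (t : symb d) : R :=
  match t with
  | Xi => - s - 3 / 2 - kappa
  | Node k es =>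
      mono_hom k +
      (fix go (es : list (option 'I_d * symb d)) : R :=
         match es with
         | nil => 0
         | (o, t') :: es' =>
             (shom t' + 2 * s - (if o is Some _ then 1 else 0)) + go es'
         end) es
  end.
End Hom.

Definition finite_symbs d (P : symb d -> Prop) : Prop :=
  exists l : seq (symb d), forall t, P t -> Stdlib.Lists.List.In t l.

(* Grafting three copies of Ξ under I(.)I(.)I(.) changes the homogeneity by
   2|Ξ| + 6s = 4s - 3 - 2κ, which is <= 0 when s <= 3/4; this gives (i).
   For s > 3/4 and κ < (4s - 3)/2 put c := (4s - 3 - 2κ)/3 > 0.  A production
   rule of T creating m edges consumes m - 1 extra copies of |Ξ| and gains at
   least m c, so by induction |τ| >= |Ξ| + c w(τ), where the weight w(τ) counts
   the edges of τ plus the total degree of its monomials.  A symbol τ <> Ξ is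
   either a pure monomial, of homogeneity >= 0 > |Ξ|, or has w(τ) >= 1.
   Finally |τ| < β bounds w(τ), and symbols of bounded weight have bounded
   depth, bounded root decorations and at most three edges per node, so there
   are finitely many of them. *)

From mathcomp Require Import all_boot all_order all_algebra.
From mathcomp Require Import reals.
From mathcomp Require Import lra zify.
From Stdlib Require Lists.List.
Set Implicit Arguments. Unset Strict Implicit. Unset Printing Implicit Defensive.
Import Order.TTheory GRing.Theory Num.Theory.
Local Open Scope ring_scope.

Definition mdeg d (k : mindex d) : nat := (\sum_(i < d.+1) k i)%N.

Fixpoint weight d (t : symb d) : nat :=
  match t with
  | Xi => 0
  | Node k es => mdeg k + sumn [seq (weight e.2).+1 | e <- es]
  end.

Lemma mono_hom_mono0 (R : realType) d (s : R) : mono_hom s (mono0 d) = 0.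
Proof. by rewrite /mono_hom ffunE mulr0 add0r big1 // => i _; rewrite ffunE. Qed.

Lemma mono_hom_ge0 (R : realType) d (s : R) (k : mindex d) :
  0 <= s -> 0 <= mono_hom s k.
Proof.
move=> s_ge0; apply: addr_ge0; first by rewrite !mulr_ge0.
by apply: sumr_ge0 => i _; rewrite ler0n.
Qed.

Lemma mono_hom_ge_mdeg (R : realType) d (s c : R) (k : mindex d) :
  0 <= c -> c <= 1 -> c <= 2 * s -> c * (mdeg k)%:R <= mono_hom s k.
Proof.
move=> c_ge0 c_le1 c_le2s.
rewrite /mono_hom /mdeg big_ord_recl natrD natr_sum mulrDr mulr_sumr.
apply: lerD; first by apply: ler_wpM2r; rewrite ?ler0n.
by apply: ler_sum => i _; rewrite -[leRHS]mul1r ler_wpM2r ?ler0n.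
Qed.

Definition cubeI d (t : symb d) : symb d :=
  Node (mono0 d) [:: (None, t); (None, t); (None, t)].

Lemma shom_cubeI (R : realType) d (s kappa : R) (t : symb d) :
  shom s kappa (cubeI t) = 3 * (shom s kappa t + 2 * s).
Proof. by rewrite /= mono_hom_mono0; lra. Qed.

Lemma inT_cubeI d (t : symb d) : inT t -> ~~ is_mono t -> inT (cubeI t).
Proof. by move=> tT t_nmono; apply: T_III. Qed.

Lemma shom_Node (R : realType) d (s kappa : R) (k : mindex d) es :
  shom s kappa (Node k es) = mono_hom s k +
    \sum_(e <- es) (shom s kappa e.2 + 2 * s - if e.1 is Some _ then 1 else 0).
Proof.
congr (_ + _); elim: es => [|[o t] es IH]; first by rewrite big_nil.
by rewrite big_cons -IH.
Qed.

Lemma shom_ge_weight (R : realType) d (s kappa c : R) :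
  0 <= c -> c <= 1 -> c <= 2 * s - 1 ->
  2 * c <= shom s kappa (@Xi d) + 4 * s ->
  3 * c <= 2 * shom s kappa (@Xi d) + 6 * s ->
  shom s kappa (@Xi d) <= 0 ->
  forall t : symb d, inT t ->
    shom s kappa (@Xi d) + c * (weight t)%:R <= shom s kappa t.
Proof.
move=> c_ge0 c_le1 c_le_Ij c_le_II c_le_III Xi_le0.
have mono (k : mindex d) : c * (mdeg k)%:R <= mono_hom s k.
  by apply: mono_hom_ge_mdeg => //; lra.
move=> t; elim=> [|k|k t1 _ IH1 _|k j t1 _ IH1 _|k t1 t2 _ IH1 _ _ IH2 _|
                  t1 t2 t3 _ IH1 _ _ IH2 _ _ IH3 _];
  rewrite ?shom_Node ?big_cons ?big_nil [weight _]/=; cbn [fst snd];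
  rewrite ?natrD -?natr1 ?natrD ?mulrDr ?mulr1 ?mulr0 ?addr0.
- by lra.
- by have := mono k; lra.
- by have := mono k; lra.
- by have := mono k; lra.
- by have := mono k; lra.
- by have := mono (mono0 d); lra.
Qed.

Lemma weight_gt0 d (t : symb d) :
  inT t -> t <> Xi -> ~~ is_mono t -> (0 < weight t)%N.
Proof. by case=> //= *; lia. Qed.

Lemma In_mem (T : eqType) (x : T) (s : seq T) : x \in s -> List.In x s.
Proof.
by elim: s => //= y s IH; rewrite inE => /predU1P [->|/IH]; [left | right].
Qed.

Lemma leq_mdeg d (k : mindex d) i : (k i <= mdeg k)%N.
Proof. by rewrite /mdeg (bigD1 i) //= leq_addr. Qed.

Definition mindices_upto d n : seq (mindex d) :=
  [seq [ffun i => nat_of_ord (g i)] | g : {ffun 'I_d.+1 -> 'I_n.+1}].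

Lemma mem_mindices_upto d n (k : mindex d) :
  (forall i, k i <= n)%N -> k \in mindices_upto d n.
Proof.
move=> k_le; apply/mapP; exists [ffun i => inord (k i)]; first by rewrite mem_enum.
by apply/ffunP => i; rewrite !ffunE inordK // ltnS.
Qed.

Fixpoint lists_upto (A : Type) (m : nat) (xs : seq A) : seq (seq A) :=
  if m is m'.+1 then
    [::] :: List.flat_map (fun x => List.map (cons x) (lists_upto m' xs)) xs
  else [:: [::]].

Lemma In_lists_upto (A : Type) m (xs ys : seq A) :
  (size ys <= m)%N -> (forall y, List.In y ys -> List.In y xs) ->
  List.In ys (lists_upto m xs).
Proof.
elim: ys m => [|y ys IH] [|m] //= => [_ _|_ _|size_le sub]; try by left.
right; apply/List.in_flat_map; exists y; split; first by apply: sub; left.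
apply/List.in_map_iff; exists ys; split=> //.
by apply: IH => // z z_in; apply: sub; right.
Qed.

Definition trees_over d n (l : seq (symb d)) : seq (symb d) :=
  Xi :: List.flat_map
          (fun k => List.map (Node k)
             (lists_upto 3 (List.list_prod (enum {: option 'I_d}) l)))
          (mindices_upto d n).

Lemma inT_Node_children d (k : mindex d) es :
  inT (Node k es) -> (size es <= 3)%N /\ (forall e, List.In e es -> inT e.2).
Proof.
have children t : inT t -> if t is Node _ es then
    (size es <= 3)%N /\ (forall e, List.In e es -> inT e.2) else True.
  by case=> //= *; split=> // e; intuition subst.
exact: children (Node k es).
Qed.

Lemma weight_child d (k : mindex d) es e :
  List.In e es -> (weight e.2 < weight (Node k es))%N.
Proof.
move=> e_in; rewrite /= ltn_addl //.
by elim: es e_in => //= e' es IH [->|/IH]; lia.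
Qed.

Lemma finite_symbs_weight_lt d n :
  finite_symbs (fun t : symb d => inT t /\ (weight t < n)%N).
Proof.
elim: n => [|n [l l_cover]]; first by exists [::] => t [].
exists (trees_over n l) => -[|k es] [tT t_lt]; first by left.
have [es_size es_T] := inT_Node_children tT.
right; apply/List.in_flat_map; exists k; split.
  apply/In_mem/mem_mindices_upto => i.
  apply: leq_trans (leq_mdeg k i) _.
  by rewrite -ltnS (leq_ltn_trans _ t_lt) ?leq_addr.
apply/List.in_map_iff; exists es; split=> //.
apply: In_lists_upto => // -[o t] e_in; apply: List.in_prod.
  by apply/In_mem; rewrite mem_enum.
apply: l_cover; split; first exact: es_T e_in.
exact: leq_trans (weight_child k e_in) t_lt.
Qed.

Theorem lemma2p2 (R : realType) (d : nat) (hd : (1 <= d)%N) (s : R)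
  (hs0 : 0 < s) (hs1 : s < 1) :
  (s <= 3 / 4 ->
     forall kappa : R, 0 < kappa ->
       exists tau : symb d, inT tau /\ tau <> Xi /\
         shom s kappa tau <= shom s kappa (@Xi d))
  /\
  (3 / 4 < s ->
     exists kappa0 : R, 0 < kappa0 /\
       forall kappa : R, 0 < kappa -> kappa < kappa0 ->
         (forall tau : symb d, inT tau -> tau <> Xi ->
            shom s kappa (@Xi d) < shom s kappa tau)
         /\ (forall beta : R,
               finite_symbs (fun tau : symb d => inT tau /\ shom s kappa tau < beta))).
Proof.
have Xi_hom kappa : shom s kappa (@Xi d) = - s - 3 / 2 - kappa by [].
split=> [s_le kappa kappa_gt0 | s_gt].
  exists (cubeI Xi); split; first exact: inT_cubeI (T_Xi d) isT.
  by split=> //; rewrite shom_cubeI Xi_hom; lra.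
exists ((4 * s - 3) / 2); split=> [|kappa kappa_gt0 kappa_lt]; first lra.
pose c := (4 * s - 3 - 2 * kappa) / 3.
have c_gt0 : 0 < c by rewrite /c; lra.
have hom_ge (t : symb d) :
    inT t -> shom s kappa (@Xi d) + c * (weight t)%:R <= shom s kappa t.
  by apply: shom_ge_weight; rewrite ?Xi_hom /c; lra.
split=> [t tT t_neq | beta].
  have [t_mono|t_nmono] := boolP (is_mono t).
    case: t tT t_neq t_mono => [//|k [|//] _ _ _].
    rewrite shom_Node big_nil addr0 Xi_hom; have := mono_hom_ge0 k (ltW hs0); lra.
  have w_ge1 : 1 <= (weight t)%:R :> R by rewrite ler1n weight_gt0.
  by have := hom_ge t tT; nra.
pose N := (Num.truncn ((beta - shom s kappa (@Xi d)) / c)).+1.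
have [l l_cover] := finite_symbs_weight_lt d N.
exists l => t [tT t_lt]; apply: l_cover; split=> //.
rewrite -(ltr_nat R); apply: lt_trans (truncnS_gt _).
by rewrite ltr_pdivlMr //; have := hom_ge t tT; lra.
Qed.
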